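(* Let $\mathcal{R}$ be a cell space, let $m\in M$ and let $\mathfrak{g}\in G/G_0$. There is an element $g\in\mathfrak{g}$ such that for every $\mathfrak{g}'\in G/G_0$ we have $(m\triangleleft\mathfrak{g})\triangleleft\mathfrak{g}'=m\triangleleft g\cdot\mathfrak{g}'$; in particular, for this $g$, $(m\triangleleft\mathfrak{g})\triangleleft g^{-1}G_0=m$.
   Context: A cell space $\mathcal{R}$ consists of a group $G$ acting transitively on the left on a nonempty set $M$ via $\triangleright$, a point $m_0\in M$ and a family $(g_{m_0,m})_{m\in M}$ in $G$ with $g_{m_0,m}\triangleright m_0=m$. $G_0$ is the stabiliser of $m_0$, $G/G_0$ the set of left cosets (elements are subsets of $G$), with $G$ acting by $g\cdot hG_0=ghG_0$. The right semi-action $\triangleleft\colon M\times G/G_0\to M$ is $m\triangleleft gG_0=g_{m_0,m}g\triangleright m_0$. *)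

From Stdlib Require Import ClassicalEpsilon.
Set Implicit Arguments.

Record CellSpace := {
  G : Type;
  gmul : G -> G -> G;
  ginv : G -> G;
  gone : G;
  gmulA : forall x y z, gmul x (gmul y z) = gmul (gmul x y) z;
  gmul1l : forall x, gmul gone x = x;
  gmul1r : forall x, gmul x gone = x;
  gmulVl : forall x, gmul (ginv x) x = gone;
  gmulVr : forall x, gmul x (ginv x) = gone;
  M : Type;
  act : G -> M -> M;
  act1 : forall m, act gone m = m;
  actM : forall g h m, act (gmul g h) m = act g (act h m);
  act_trans : forall m m', exists g, act g m = m';
  m0 : M;
  gm0 : M -> G;
  gm0_spec : forall m, act (gm0 m) m0 = m
}.

Section Cosets.
Variable R : CellSpace.

Definition G0 (k : G R) : Prop := act R k (m0 R) = m0 R.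

Definition lcoset (g : G R) : G R -> Prop :=
  fun x => exists k, G0 k /\ x = gmul R g k.

Definition is_lcoset (C : G R -> Prop) : Prop := exists g, C = lcoset g.

Definition Coset := { C : G R -> Prop | is_lcoset C }.

Definition mkCoset (g : G R) : Coset := exist _ (lcoset g) (ex_intro _ g eq_refl).

Definition rep (C : Coset) : G R :=
  proj1_sig (constructive_indefinite_description _ (proj2_sig C)).

Definition cact (g : G R) (C : Coset) : Coset := mkCoset (gmul R g (rep C)).

(* right semi-action  m <| gG0 = g_{m0,m} g |> m0 *)
Definition rsa (m : M R) (C : Coset) : M R := act R (gmul R (gm0 R m) (rep C)) (m0 R).

End Cosets.

From Stdlib Require Import ClassicalEpsilon.

(* Put [m' := m <| c] and [g := g_{m0,m}^-1 g_{m0,m'}], so that [g_{m0,m} g = g_{m0,m'}].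
   The value [m <| hG0 = g_{m0,m} h |> m0] does not depend on the representative [h],
   because representatives differ by elements of the stabiliser of [m0]; hence
   [m' <| h'G0 = g_{m0,m} g h' |> m0 = m <| g.h'G0], and for [h' = g^-1] this is
   [g_{m0,m} |> m0 = m]. The element [g] lies in [c] since [g |> m0 = rep c |> m0]. *)

Section CellSpaceFacts.
Variable R : CellSpace.

Local Notation "x * y" := (gmul R x y).
Local Notation "x ^-1" := (ginv R x) (at level 3, format "x ^-1").
Local Notation "g |> m" := (act R g m) (at level 40).

Lemma act_Vmul (g : G R) (m : M R) : g^-1 |> (g |> m) = m.
Proof. rewrite <- actM, gmulVl, act1; reflexivity. Qed.

Lemma act_mulG0 (a k : G R) : G0 R k -> (a * k) |> m0 R = a |> m0 R.
Proof. intro Hk; unfold G0 in Hk; rewrite actM, Hk; reflexivity. Qed.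

Lemma rep_eq (C : Coset R) : proj1_sig C = lcoset R (rep C).
Proof.
  unfold rep.
  destruct (constructive_indefinite_description _ (proj2_sig C)) as [r Hr].
  exact Hr.
Qed.

Lemma lcoset_self (g : G R) : lcoset R g g.
Proof.
  exists (gone R); split.
  - apply act1.
  - symmetry; apply gmul1r.
Qed.

Lemma rep_mkCoset (h : G R) : exists k, G0 R k /\ rep (mkCoset R h) = h * k.
Proof.
  pose proof (lcoset_self (rep (mkCoset R h))) as Hrep.
  rewrite <- rep_eq in Hrep.
  exact Hrep.
Qed.

Lemma rsa_mkCoset (m : M R) (h : G R) :
  rsa m (mkCoset R h) = (gm0 R m * h) |> m0 R.
Proof.
  unfold rsa.
  destruct (rep_mkCoset h) as [k [Hk ->]].
  rewrite gmulA; apply act_mulG0; exact Hk.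
Qed.

Lemma rsa_cact (m : M R) (g : G R) (C : Coset R) :
  rsa m (cact g C) = (gm0 R m * g * rep C) |> m0 R.
Proof. unfold cact; rewrite rsa_mkCoset, gmulA; reflexivity. Qed.

Lemma lcoset_of_act (g h : G R) : g |> m0 R = h |> m0 R -> lcoset R h g.
Proof.
  intro E; exists (h^-1 * g); split.
  - unfold G0; rewrite actM, E; apply act_Vmul.
  - rewrite gmulA, gmulVr, gmul1l; reflexivity.
Qed.

End CellSpaceFacts.

Theorem lemma4 (R : CellSpace) (m : M R) (c : Coset R) :
  exists g : G R,
    proj1_sig c g /\
    (forall c' : Coset R, rsa (rsa m c) c' = rsa m (cact g c')) /\
    rsa (rsa m c) (@mkCoset R (ginv R g)) = m.
Proof.
  set (m' := rsa m c).
  set (g := gmul R (ginv R (gm0 R m)) (gm0 R m')).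
  assert (Hg : gmul R (gm0 R m) g = gm0 R m')
    by (unfold g; rewrite gmulA, gmulVr, gmul1l; reflexivity).
  exists g; split; [| split].
  - rewrite rep_eq; apply lcoset_of_act.
    unfold g; rewrite actM, gm0_spec.
    unfold m', rsa; rewrite actM; apply act_Vmul.
  - intro c'; rewrite rsa_cact, Hg; reflexivity.
  - rewrite rsa_mkCoset; fold m'; rewrite <- Hg, <- gmulA, gmulVr, gmul1r.
    apply gm0_spec.
Qed.
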